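(* For every integer $m\ge 0$ and $n\ge 0$, $$x^n=\sum_{k=0}^{\lfloor n/2\rfloor}(-s)^k\frac{[n]!}{[k]!\,[n-2k]!}\,\frac{[n+m-2k]!}{[n+m-k]!}\,l_{n-2k}(x,m,s,q).$$ Consequently, if $\Lambda_{m,q}$ is the linear functional on polynomials in $x$ determined by $\Lambda_{m,q}\big(l_n(x,m,-q^m,q)\big)=[n=0]$ for all $n\ge0$, then $\Lambda_{m,q}(x^{2n+1})=0$ and $$\Lambda_{m,q}(x^{2n})=q^{mn}\,\frac{[2n]!\,[m]!}{[n]!\,[m+n]!}\quad (n\ge 0).$$
   Context: $q$ is an indeterminate; $[n]=\frac{1-q^n}{1-q}$, $[n]!=[1][2]\cdots[n]$, $[0]!=1$. For an integer $m\ge0$ and indeterminates $x,s$, $$l_n(x,m,s,q)=\sum_{k=0}^{\lfloor n/2\rfloor}s^k q^{\binom k2}\frac{[n]!}{[k]!\,[n-2k]!}\,\frac{[m+n-k-1]!}{[m+n-1]!}\,x^{n-2k}\quad (n\ge1),\qquad l_0(x,m,s,q)=1.$$ $[P]$ is the Iverson bracket. *)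

From HB Require Import structures.
From mathcomp Require Import all_boot all_order all_algebra.
Set Implicit Arguments. Unset Strict Implicit. Unset Printing Implicit Defensive.
Import Order.TTheory GRing.Theory Num.Theory.
Local Open Scope ring_scope.

Definition qint (F : fieldType) (q : F) (n : nat) : F := \sum_(i < n) q ^+ i.

Definition qfact (F : fieldType) (q : F) (n : nat) : F :=
  \prod_(i < n) qint q i.+1.

Definition lpoly (F : fieldType) (q : F) (m : nat) (s : F) (n : nat) : {poly F} :=
  if n == 0%N then 1 else
  \sum_(k < n./2.+1)
    (s ^+ k * q ^+ 'C(k, 2) * (qfact q n / (qfact q k * qfact q (n - 2 * k)))
       * (qfact q (m + n - k - 1) / qfact q (m + n - 1))) *: 'X^(n - 2 * k).

From HB Require Import structures.
From mathcomp Require Import all_boot all_order all_algebra.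
From mathcomp Require Import ring zify.
Import Order.TTheory GRing.Theory Num.Theory.
Set Implicit Arguments. Unset Strict Implicit. Unset Printing Implicit Defensive.
Local Open Scope ring_scope.

(* Write [l_n = sum_j c(n,j) x^(n-2j)] and [d(n,k)] for the coefficients of the
   claimed expansion of [x^n].  Substituting the expansions of the [x^(n-2j)]
   into [l_n], the coefficient of [l_(n-2r)] is [sum_(j<=r) c(n,j) d(n-2j,r-j)],
   which factors as a constant times
     [sum_(j<=r) (-1)^j q^(j choose 2) [r choose j]_q [N-j][N-j-1]...[N-j-r+2]],
   the r-th q-difference of a q-polynomial of degree r-1; it vanishes for r > 0.
   Hence the expansion of [x^n] follows by strong induction on [n].  Applying
   [Lambda] to it kills every [l_(n-2k)] except [l_0], which gives the moments. *)

Lemma sum_triangle (V : nmodType) (G : nat -> nat -> V) (B : nat) :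
  \sum_(j < B) \sum_(k < B - j) G j k = \sum_(r < B) \sum_(j < r.+1) G j (r - j)%N.
Proof.
elim: B => [|B IH]; first by rewrite !big_ord0.
rewrite big_ord_recr [RHS]big_ord_recr /= -IH subSnn big_ord1.
rewrite [in RHS]big_ord_recr /= subnn.
have -> : \sum_(j < B) \sum_(k < B.+1 - j) G j k =
          \sum_(j < B) (\sum_(k < B - j) G j k + G j (B - j)%N).
  apply: eq_bigr => j _; rewrite subSn; last exact: ltnW (ltn_ord j).
  by rewrite big_ord_recr.
by rewrite big_split /= !addrA.
Qed.

Section QFactorial.
Variables (F : fieldType) (q : F).

Lemma qintD a b : qint q (a + b) = qint q a + q ^+ a * qint q b.
Proof.
rewrite /qint big_split_ord /= mulr_sumr; congr (_ + _).
by apply: eq_bigr => i _; rewrite exprD.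
Qed.

Lemma qfact0 : qfact q 0 = 1.
Proof. by rewrite /qfact big_ord0. Qed.

Lemma qfactS n : qfact q n.+1 = qfact q n * qint q n.+1.
Proof. by rewrite /qfact big_ord_recr. Qed.

Hypothesis qint_neq0 : forall j : nat, (0 < j)%N -> qint q j != 0.

Lemma qfact_neq0 n : qfact q n != 0.
Proof.
elim: n => [|n IH]; first by rewrite qfact0 oner_neq0.
by rewrite qfactS mulf_neq0 ?qint_neq0.
Qed.

(* The q-falling factorial [n][n-1]...[n-i+1], provided [i <= n]. *)
Definition qfall n i : F := qfact q n / qfact q (n - i).

Lemma qfall_diff n i : (0 < i)%N -> (i < n)%N ->
  qfall n i - q ^+ i * qfall n.-1 i = qint q i * qfall n.-1 i.-1.
Proof.
move=> i_gt0 lt_in; rewrite /qfall.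
set a := (n - i).-1.
have -> : n = (a + i).+1 by rewrite /a; lia.
have -> : ((a + i).+1 - i = a.+1)%N by lia.
have -> : ((a + i).+1.-1 - i = a)%N by lia.
have -> : ((a + i).+1.-1 - i.-1 = a.+1)%N by lia.
have qintS : qint q (a + i).+1 = qint q i + q ^+ i * qint q a.+1.
  by rewrite -addSn addnC qintD.
rewrite /= !qfactS qintS.
by field; rewrite qfact_neq0 qint_neq0.
Qed.

(* [(-1)^j q^(j choose 2) [r choose j]_q / [r]!]: the weights of the r-th
   q-difference operator. *)
Definition qdiff_coef r j : F :=
  (-1) ^+ j * q ^+ 'C(j, 2) / (qfact q j * qfact q (r - j)).

Lemma qdiff_coefS r j : (j < r.+2)%N ->
  qint q r.+1 * qdiff_coef r.+1 j =
  (if (j <= r)%N then qdiff_coef r j else 0) -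
  (if (0 < j)%N then q ^+ r * qdiff_coef r j.-1 else 0).
Proof.
rewrite /qdiff_coef; case: j => [|j] le_jr.
  rewrite /= !subn0 qfactS qfact0 !expr0 !mul1r subr0.
  by field; rewrite qfact_neq0 qint_neq0.
have [lt_jr | gt_jr | ->] := ltngtP j r; last 2 first.
- lia.
- rewrite /= sub0r subnn qfact0 qfactS exprS binS bin1 exprD subnn qfact0.
  by field; rewrite qfact_neq0 qint_neq0.
set c := (r - j.+1)%N.
have -> : r = (j + c).+1 by rewrite /c; lia.
rewrite /=.
have -> : ((j + c).+2 - j.+1 = c.+1)%N by lia.
have -> : ((j + c).+1 - j = c.+1)%N by lia.
have qintS : qint q (j + c).+2 = qint q c.+1 + q ^+ c.+1 * qint q j.+1.
  by rewrite -qintD; congr qint; lia.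
rewrite !qfactS binS bin1 qintS !exprS !exprD.
by field; rewrite !qfact_neq0 !qint_neq0.
Qed.

Definition qdiff_qfall r N := \sum_(j < r.+1) qdiff_coef r j * qfall (N - j) r.-1.

Lemma qdiff_qfallS r N : (0 < r)%N -> (2 * r < N)%N ->
  qint q r.+1 * qdiff_qfall r.+1 N = qint q r * qdiff_qfall r N.-1.
Proof.
move=> r_gt0 lt_2rN; rewrite /qdiff_qfall mulr_sumr.
under eq_bigr => j _ do rewrite mulrA (qdiff_coefS (ltn_ord j)) mulrBl.
rewrite sumrB big_ord_recr /= ltnn mul0r addr0 [X in _ - X]big_ord_recl /=.
rewrite mul0r add0r mulr_sumr -sumrB; apply: eq_bigr => j _.
rewrite /= -ltnS ltn_ord /bump /= add1n add0n.
have -> : (N - j.+1 = (N - j).-1)%N by lia.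
have -> : (N.-1 - j = (N - j).-1)%N by lia.
rewrite [RHS]mulrCA -qfall_diff //; last by have := ltn_ord j; lia.
ring.
Qed.

Lemma qdiff_qfall_eq0 r N : (0 < r)%N -> (2 * r <= N.+1)%N -> qdiff_qfall r N = 0.
Proof.
elim: r N => [//|[|r] IH] N _ le_2rN.
  rewrite /qdiff_qfall big_ord_recr big_ord1 /qdiff_coef /qfall /=.
  rewrite !subn0 subnn qfactS qfact0 !divff ?qfact_neq0 // /qint big_ord1.
  by rewrite bin_small // !expr0 expr1 !(mulr1, mul1r, invr1) addrN.
have := @qdiff_qfallS r.+1 N isT ltac:(lia); rewrite IH ?mulr0 //; last lia.
by move=> /eqP; rewrite mulf_eq0 (negbTE (qint_neq0 _)) // => /eqP.
Qed.

End QFactorial.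

Section Inversion.
Variables (F : fieldType) (q : F) (m : nat) (s : F).
Hypothesis qint_neq0 : forall j : nat, (0 < j)%N -> qint q j != 0.

Local Notation qf := (qfact q).
Local Notation qf_neq0 := (qfact_neq0 qint_neq0).

(* [lcoef n k] is the coefficient of [x^(n-2k)] in [l_n]; [xcoef n k] that of
   [l_(n-2k)] in the expansion of [x^n] to be proved. *)
Definition lcoef n k : F :=
  s ^+ k * q ^+ 'C(k, 2) * (qf n / (qf k * qf (n - 2 * k)))
    * (qf (m + n - k - 1) / qf (m + n - 1)).

Definition xcoef n k : F :=
  (- s) ^+ k * (qf n / (qf k * qf (n - 2 * k)))
    * (qf (n + m - 2 * k) / qf (n + m - k)).

Lemma lcoefn0 n : lcoef n 0 = 1.
Proof. by rewrite /lcoef !expr0 muln0 !subn0 qfact0 !mul1r !divff ?qf_neq0 ?mulr1. Qed.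

Lemma xcoefn0 n : xcoef n 0 = 1.
Proof. by rewrite /xcoef !expr0 muln0 !subn0 qfact0 !mul1r !divff ?qf_neq0 ?mulr1. Qed.

Lemma lpolyE n : lpoly q m s n = \sum_(k < n./2.+1) lcoef n k *: 'X^(n - 2 * k).
Proof.
case: n => [|n]; last by [].
by rewrite big_ord1 lcoefn0 scale1r.
Qed.

Lemma lcoef_xcoef n r j : (0 < r)%N -> (2 * r <= n)%N -> (j < r.+1)%N ->
  lcoef n j * xcoef (n - 2 * j) (r - j) =
  s ^+ r * qf n * qf (m + n - 2 * r) / (qf (n - 2 * r) * qf (m + n - 1)) *
  ((-1) ^+ r * (qdiff_coef q r j * qfall q (m + n - 1 - j) r.-1)).
Proof.
move=> r_gt0 le_2rn le_jr; rewrite /lcoef /xcoef /qdiff_coef /qfall.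
have -> : (n - 2 * j - 2 * (r - j) = n - 2 * r)%N by lia.
have -> : (n - 2 * j + m - 2 * (r - j) = m + n - 2 * r)%N by lia.
have -> : (n - 2 * j + m - (r - j) = m + n - 1 - j - r.-1)%N by lia.
have -> : (m + n - j - 1 = m + n - 1 - j)%N by lia.
have splitr (x : F) : x ^+ r = x ^+ (r - j) * x ^+ j by rewrite -exprD subnK.
have signB : (-1) ^+ (r - j) = (-1) ^+ r * (-1) ^+ j :> F.
  by rewrite splitr -mulrA -expr2 sqrr_sign mulr1.
rewrite (exprNn s) signB [s ^+ r]splitr.
by field; rewrite !qf_neq0.
Qed.

Lemma lcoef_xcoef_conv n r : (0 < r)%N -> (2 * r <= n)%N ->
  \sum_(j < r.+1) lcoef n j * xcoef (n - 2 * j) (r - j) = 0.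
Proof.
move=> r_gt0 le_2rn.
under eq_bigr => j _ do rewrite (lcoef_xcoef r_gt0 le_2rn (ltn_ord j)).
rewrite -!mulr_sumr [X in _ * (_ * X)](qdiff_qfall_eq0 qint_neq0 r_gt0) ?mulr0 //.
lia.
Qed.

Definition lexpand n := \sum_(k < n./2.+1) xcoef n k *: lpoly q m s (n - 2 * k).

Lemma lpoly_lexpand n :
  \sum_(j < n./2.+1) lcoef n j *: lexpand (n - 2 * j) = lpoly q m s n.
Proof.
set A := n./2; have hA : A = (n %/ 2)%N by rewrite divn2.
clearbody A.
transitivity (\sum_(j < A.+1) \sum_(k < A.+1 - j)
   (lcoef n j * xcoef (n - 2 * j) k) *: lpoly q m s (n - 2 * j - 2 * k)).
  apply: eq_bigr => j _; rewrite /lexpand scaler_sumr.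
  have -> : ((n - 2 * j)./2.+1 = A.+1 - j)%N.
    by have := ltn_ord j; rewrite -divn2; lia.
  by apply: eq_bigr => k _; rewrite scalerA.
rewrite (sum_triangle (fun j k =>
  (lcoef n j * xcoef (n - 2 * j) k) *: lpoly q m s (n - 2 * j - 2 * k))).
transitivity (\sum_(r < A.+1)
   (\sum_(j < r.+1) lcoef n j * xcoef (n - 2 * j) (r - j)) *: lpoly q m s (n - 2 * r)).
  apply: eq_bigr => r _; rewrite scaler_suml; apply: eq_bigr => j _.
  have -> : (n - 2 * j - 2 * (r - j) = n - 2 * r)%N.
    by have := ltn_ord j; have := ltn_ord r; lia.
  by [].
rewrite big_ord_recl big_ord1 lcoefn0 xcoefn0 mulr1 scale1r muln0 subn0.
rewrite big1 ?addr0 // => r _.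
by rewrite lcoef_xcoef_conv ?scale0r ?lift0 //; have := ltn_ord r; lia.
Qed.

Lemma expX_lexpand n : 'X^n = lexpand n.
Proof.
elim/ltn_ind: n => n IH.
have := lpoly_lexpand n; rewrite lpolyE big_ord_recl [X in _ = X]big_ord_recl.
rewrite lcoefn0 !scale1r /= muln0 subn0.
have IHtail (j : 'I_n./2) : lexpand (n - 2 * bump 0 j) = 'X^(n - 2 * bump 0 j).
  case: j => k /= lt_k; rewrite IH // /bump add1n; move: lt_k; rewrite -divn2; lia.
under eq_bigr => j _ do rewrite IHtail.
by move/addIr.
Qed.

End Inversion.

Section Moments.
Variables (F : fieldType) (q : F) (m : nat) (Lam : {poly F} -> F).
Hypothesis qint_neq0 : forall j : nat, (0 < j)%N -> qint q j != 0.
Hypothesis Lam_linear : forall a p r, Lam (a *: p + r) = a * Lam p + Lam r.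
Hypothesis Lam_lpoly : forall n, Lam (lpoly q m (- q ^+ m) n) = (n == 0)%:R.

Lemma Lam_expX n :
  Lam 'X^n = \sum_(k < n./2.+1) xcoef q m (- q ^+ m) n k * (n - 2 * k == 0)%N%:R.
Proof.
have Lam0 : Lam 0 = 0.
  have := Lam_linear 1 0 0; rewrite scaler0 addr0 mul1r => Lam0_double.
  by apply: (@addrI _ (Lam 0)); rewrite addr0 -Lam0_double.
have LamD p r : Lam (p + r) = Lam p + Lam r.
  by rewrite -[in LHS](scale1r p) Lam_linear mul1r.
have LamZ a p : Lam (a *: p) = a * Lam p.
  by rewrite -[_ *: _]addr0 Lam_linear Lam0 addr0.
rewrite (@expX_lexpand F q m (- q ^+ m) qint_neq0) /lexpand (big_morph Lam LamD Lam0).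
by apply: eq_bigr => k _; rewrite LamZ Lam_lpoly.
Qed.

Lemma Lam_expX_odd n : Lam 'X^((2 * n).+1) = 0.
Proof.
rewrite Lam_expX big1 // => -[k lt_k] _ /=.
have -> : ((2 * n).+1 - 2 * k == 0)%N = false.
  by move: lt_k; rewrite -divn2 => ?; apply/negbTE/eqP; lia.
by rewrite mulr0.
Qed.

Lemma Lam_expX_even n :
  Lam 'X^(2 * n) =
  q ^+ (m * n) * (qfact q (2 * n) * qfact q m) / (qfact q n * qfact q (m + n)).
Proof.
rewrite Lam_expX (_ : (2 * n)./2 = n); last by rewrite -divn2; lia.
rewrite big_ord_recr /= big1 ?add0r => [|k _]; last first.
  have -> : (2 * n - 2 * k == 0)%N = false by apply/negbTE/eqP; have := ltn_ord k; lia.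
  by rewrite mulr0.
rewrite subnn eqxx mulr1 /xcoef opprK subnn qfact0 -exprM mulnC.
have -> : (2 * n + m - 2 * n = m)%N by lia.
have -> : (2 * n + m - n = m + n)%N by lia.
by field; rewrite !qfact_neq0.
Qed.

End Moments.

Theorem mainTheorem9 (F : fieldType) (q : F)
  (hq : forall j : nat, (0 < j)%N -> qint q j != 0) (m : nat) :
  (forall (s : F) (n : nat),
     'X^n = \sum_(k < n./2.+1)
              ((- s) ^+ k * (qfact q n / (qfact q k * qfact q (n - 2 * k)))
                 * (qfact q (n + m - 2 * k) / qfact q (n + m - k)))
                *: lpoly q m s (n - 2 * k))
  /\
  (forall Lam : {poly F} -> F,
     (forall (a : F) (p r : {poly F}), Lam (a *: p + r) = a * Lam p + Lam r) ->
     (forall n : nat, Lam (lpoly q m (- q ^+ m) n) = (n == 0%N)%:R) ->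
     forall n : nat,
       Lam 'X^((2 * n).+1) = 0 /\
       Lam 'X^(2 * n) = q ^+ (m * n) * (qfact q (2 * n) * qfact q m)
                          / (qfact q n * qfact q (m + n))).
Proof.
split=> [s n | Lam Lam_linear Lam_lpoly n].
  exact: (@expX_lexpand F q m s hq n).
split; first exact: Lam_expX_odd hq Lam_linear Lam_lpoly n.
exact: Lam_expX_even hq Lam_linear Lam_lpoly n.
Qed.
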